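(* Let $\mathbf{k}$ be a field, $Q$ a finite connected quiver, $\Lambda=\mathbf{k}Q/\mathcal{J}^2$ ($\mathcal{J}$ the arrow ideal), $n\ge2$, and assume $\mathcal{C}\subseteq\operatorname{mod}\Lambda$ is an $n$-cluster tilting subcategory. Then for every arrow $v\to u$ in $Q$ we have $\delta^+(v)+\delta^-(u)\le3$.
   Context: Modules are finite-dimensional right modules. $\mathcal{C}$ is $n$-cluster tilting if it is functorially finite and $\mathcal{C}=\{X\mid \operatorname{Ext}^i(X,\mathcal{C})=0\ \forall 0<i<n\}=\{X\mid\operatorname{Ext}^i(\mathcal{C},X)=0\ \forall 0<i<n\}$. $\delta^-(v)$, $\delta^+(v)$ are the numbers of arrows ending, resp. starting, at $v$. *)

(* Finite-dimensional modules over kQ/J^2 are modelled as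
   representations of the finite quiver Q satisfying the relations
   "composite of any two consecutive arrows is zero". *)
From mathcomp Require Import all_boot all_algebra.
Set Implicit Arguments. Unset Strict Implicit. Unset Printing Implicit Defensive.
Import GRing.Theory.
Local Open Scope ring_scope.

Section Reps.
Variables (k : fieldType) (m : nat) (A : finType) (s t : A -> 'I_m).

(* A finite-dimensional representation: vector spaces k^(dimv i) (row vectors)
   and linear maps x |-> x *m mapv a for each arrow a. *)
Record rep := Rep {
  dimv : 'I_m -> nat;
  mapv : forall a : A, 'M[k]_(dimv (s a), dimv (t a)) }.

Definition rad2_zero (X : rep) : Prop :=
  forall (a b : A) (e : t a = s b),
    mapv X a *m castmx (esym (congr1 (dimv X) e), erefl) (mapv X b) = 0.

Record module := Module { mrep :> rep; mrel : rad2_zero mrep }.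

Definition hommx (X Y : module) := forall i : 'I_m, 'M[k]_(dimv X i, dimv Y i).

Definition is_hom (X Y : module) (f : hommx X Y) : Prop :=
  forall a : A, mapv X a *m f (t a) = f (s a) *m mapv Y a.

Definition ses (X Y Z : module) (f : hommx X Y) (g : hommx Y Z) : Prop :=
  [/\ is_hom f, is_hom g &
      forall i, [/\ row_free (f i), row_full (g i) & (f i == kermx (g i))%MS]].

(* Ext^1(Z, X) = 0 : every extension of Z by X splits. *)
Definition ext1_vanish (Z X : module) : Prop :=
  forall (Y : module) (f : hommx X Y) (g : hommx Y Z), ses f g ->
    exists h : hommx Z Y, is_hom h /\ forall i, h i *m g i = 1%:M.

Definition projective (P : module) : Prop :=
  forall (X Y : module) (g : hommx X Y), is_hom g -> (forall i, row_full (g i)) ->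
    forall p : hommx P Y, is_hom p ->
      exists q : hommx P X, is_hom q /\ forall i, q i *m g i = p i.

(* ext_vanishS j X Y  <->  Ext^(j+1)(X, Y) = 0, defined by dimension shifting
   along a projective presentation 0 -> K -> P -> X -> 0. *)
Fixpoint ext_vanishS (j : nat) (X Y : module) : Prop :=
  match j with
  | 0 => ext1_vanish X Y
  | j'.+1 => exists (K P : module) (f : hommx K P) (g : hommx P X),
      [/\ projective P, ses f g & ext_vanishS j' K Y]
  end.

Definition contravariantly_finite (C : module -> Prop) : Prop :=
  forall X : module, exists (C0 : module) (f : hommx C0 X),
    [/\ C C0, is_hom f &
      forall (C1 : module) (g : hommx C1 X), C C1 -> is_hom g ->
        exists h : hommx C1 C0, is_hom h /\ forall i, h i *m f i = g i].

Definition covariantly_finite (C : module -> Prop) : Prop :=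
  forall X : module, exists (C0 : module) (f : hommx X C0),
    [/\ C C0, is_hom f &
      forall (C1 : module) (g : hommx X C1), C C1 -> is_hom g ->
        exists h : hommx C0 C1, is_hom h /\ forall i, f i *m h i = g i].

Definition functorially_finite (C : module -> Prop) : Prop :=
  contravariantly_finite C /\ covariantly_finite C.

(* n-cluster tilting: Ext^i for 0 < i < n, i.e. i = j+1 with j+1 < n. *)
Definition n_cluster_tilting (n : nat) (C : module -> Prop) : Prop :=
  [/\ functorially_finite C,
      (forall X : module, C X <->
         (forall Y : module, C Y -> forall j, (j.+1 < n)%N -> ext_vanishS j X Y)) &
      (forall X : module, C X <->
         (forall Y : module, C Y -> forall j, (j.+1 < n)%N -> ext_vanishS j Y X))].

End Reps.

Definition quiver_adj (m : nat) (A : finType) (s t : A -> 'I_m) : rel 'I_m :=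
  fun i j => [exists a, ((s a == i) && (t a == j)) || ((s a == j) && (t a == i))].

Definition quiver_connected (m : nat) (A : finType) (s t : A -> 'I_m) : Prop :=
  forall i j : 'I_m, connect (quiver_adj s t) i j.

Definition outdeg (m : nat) (A : finType) (s : A -> 'I_m) (v : 'I_m) : nat :=
  #|[set a | s a == v]|.
Definition indeg (m : nat) (A : finType) (t : A -> 'I_m) (u : 'I_m) : nat :=
  #|[set a | t a == u]|.

(* Write v = s a and u = t a.  The indecomposable projective P_v (basis: e_v and
   the arrows starting at v) and the indecomposable injective I_u (basis: e_u and
   the arrows ending at u) lie in C, so Ext^1(I_u, P_v) = 0 because n >= 2.
   An extension of I_u by P_v lives on P_v (+) I_u, each arrow d acting by a
   block matrix whose corner is a map theta_d : I_u(s d) -> P_v(t d); it splits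
   iff theta is the coboundary of vertexwise maps alpha : I_u -> P_v.  As J^2 = 0,
   the coboundary equations only involve the coefficients beta_b (from e_u to an
   arrow b : v -> u) and lambda_c (from an arrow c : v -> u to e_v) of alpha.
   If delta^+(v) + delta^-(u) >= 4 there are two arrows other than a ending at u,
   or two starting at v, or one of each, and in each case some theta supported on
   a single basis coefficient makes these equations inconsistent. *)

From Pilot Require Import Defs.
From mathcomp Require Import all_boot all_algebra.
From mathcomp Require Import zify.
Set Implicit Arguments. Unset Strict Implicit. Unset Printing Implicit Defensive.
Import GRing.Theory.
Local Open Scope ring_scope.

Section BasisVectors.
Variables (k : fieldType) (T : finType) (p : {pred T}).

Definition basisv (x : T) : 'rV[k]_#|p| := \row_r (enum_val r == x)%:R.

Lemma basisv_notin x : x \notin p -> basisv x = 0.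
Proof.
move=> px; apply/rowP => r; rewrite !mxE.
by case: eqP => // ex; rewrite -ex enum_valP in px.
Qed.

Lemma basisv_enum_val r : basisv (enum_val r) = delta_mx 0 r.
Proof. by apply/rowP => j; rewrite !mxE (inj_eq enum_val_inj). Qed.

Lemma basisv_mul_rows n x (G : T -> 'rV[k]_n) :
  basisv x *m \matrix_r G (enum_val r) = if x \in p then G x else 0.
Proof.
case: ifP => [px | /negbT px]; last by rewrite basisv_notin ?mul0mx.
by rewrite -{1}(enum_rankK_in px px) basisv_enum_val -rowE rowK enum_rankK_in.
Qed.

Lemma basisv_dot x y : basisv x *m (basisv y)^T = ((x == y) && (x \in p))%:R%:M.
Proof.
have -> : (basisv y)^T = \matrix_r ((enum_val r == y)%:R%:M : 'rV_1).
  by apply/matrixP => i j; rewrite !mxE ord1 eqxx mulr1n.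
rewrite (basisv_mul_rows x (fun z => ((z == y)%:R%:M : 'rV_1))) andbC.
by case: (x \in p); rewrite //= raddf0.
Qed.

Lemma basisv_rows_eq n (M N : 'M[k]_(#|p|, n)) :
  (forall x, x \in p -> basisv x *m M = basisv x *m N) -> M = N.
Proof.
move=> MN; apply/row_matrixP => r.
by rewrite !rowE -basisv_enum_val; apply: MN; exact: enum_valP.
Qed.

Lemma basisv_cols_eq n (M N : 'M[k]_(n, #|p|)) :
  (forall x, x \in p -> M *m (basisv x)^T = N *m (basisv x)^T) -> M = N.
Proof.
move=> MN; apply: trmx_inj; apply: basisv_rows_eq => x px.
by rewrite -[basisv x]trmxK -!trmx_mul MN.
Qed.

Lemma mul_cols_basisv n x (G : T -> 'cV[k]_n) :
  (\matrix_r (G (enum_val r))^T)^T *m (basisv x)^T = if x \in p then G x else 0.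
Proof.
rewrite -trmx_mul (basisv_mul_rows x (fun z => (G z)^T)).
by case: ifP; rewrite ?trmxK ?trmx0.
Qed.

End BasisVectors.

Section Representations.
Variables (k : fieldType) (m : nat) (A : finType) (s t : A -> 'I_m).
Local Notation rep := (rep k s t).
Local Notation module := (module k s t).
Local Notation dimv := Defs.dimv.

Definition amap (X : rep) (a : A) (i j : 'I_m) : 'M[k]_(dimv X i, dimv X j) :=
  match s a =P i, t a =P j with
  | ReflectT ei, ReflectT ej => castmx (congr1 (dimv X) ei, congr1 (dimv X) ej) (mapv X a)
  | _, _ => 0
  end.

Lemma amapE (X : rep) a : amap X a (s a) (t a) = mapv X a.
Proof. by rewrite /amap; case: eqP => // ei; case: eqP => // ej; rewrite castmx_id. Qed.

Lemma amap0 (X : rep) a i j : ~~ ((s a == i) && (t a == j)) -> amap X a i j = 0.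
Proof.
move=> off; rewrite /amap; case: eqP => [ei | //]; case: eqP => [ej | //].
by rewrite ei ej !eqxx in off.
Qed.

Lemma hom_amap (X Y : module) (f : hommx X Y) : is_hom f ->
  forall a i j, amap X a i j *m f j = f i *m amap Y a i j.
Proof.
move=> hom_f a i j; have [/andP[/eqP <- /eqP <-] | off] := boolP ((s a == i) && (t a == j)).
  by rewrite !amapE.
by rewrite !amap0 // mul0mx mulmx0.
Qed.

Lemma amap_is_hom (X Y : module) (f : hommx X Y) :
  (forall a i j, amap X a i j *m f j = f i *m amap Y a i j) -> is_hom f.
Proof. by move=> f_amap a; have := f_amap a (s a) (t a); rewrite !amapE. Qed.

Lemma amap_cast (X : rep) b i (e : i = s b) :
  amap X b i (t b) = castmx (esym (congr1 (dimv X) e), erefl) (mapv X b).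
Proof. by subst i; rewrite castmx_id amapE. Qed.

Lemma amapM0 (X : module) a b i j l : amap X a i j *m amap X b j l = 0.
Proof.
have [/andP[/eqP <- /eqP <-] | off] := boolP ((s a == i) && (t a == j)); last first.
  by rewrite (amap0 _ off) mul0mx.
have [/andP[/eqP e /eqP <-] | off] := boolP ((s b == t a) && (t b == l)); last first.
  by rewrite (amap0 _ off) mulmx0.
by rewrite amapE (amap_cast _ (esym e)) mrel.
Qed.

Lemma is_hom_comp (X Y Z : module) (f : hommx X Y) (g : hommx Y Z) :
  is_hom f -> is_hom g -> @is_hom k m A s t X Z (fun i => f i *m g i).
Proof. by move=> hf hg a; rewrite mulmxA hf -!mulmxA hg. Qed.

Definition rep_of (d : 'I_m -> nat) (F : A -> forall i j, 'M[k]_(d i, d j)) : rep :=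
  @Rep _ _ _ s t d (fun a => F a (s a) (t a)).

Lemma amap_rep_of d F : (forall a i j, ~~ ((s a == i) && (t a == j)) -> F a i j = 0) ->
  forall a i j, amap (@rep_of d F) a i j = F a i j.
Proof.
move=> F0 a i j; have [/andP[/eqP <- /eqP <-] | off] := boolP ((s a == i) && (t a == j)).
  exact: amapE.
by rewrite amap0 ?F0.
Qed.

Lemma rep_of_rad2 d F : (forall a b i j l, F a i j *m F b j l = 0) -> rad2_zero (@rep_of d F).
Proof. by move=> FF0 a b e /=; case: (s b) / e; rewrite castmx_id FF0. Qed.

End Representations.

Section Homological.
Variables (k : fieldType) (m : nat) (A : finType) (s t : A -> 'I_m).
Local Notation module := (module k s t).
Local Notation dimv := Defs.dimv.

Definition zero_module : module :=
  Module (rep_of_rad2 (d := fun=> 0%N) (fun a b i j l => mul0mx _ (0 : 'M[k]_(0, 0)))).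

Lemma flatmx_eq p (M N : 'M[k]_(0, p)) : M = N.
Proof. by rewrite (flatmx0 M) (flatmx0 N). Qed.

Lemma projective_zero : projective zero_module.
Proof. by move=> X Y g _ _ p _; exists (fun=> 0); split=> [a | i]; apply: flatmx_eq. Qed.

Lemma ses_zero_id (P : module) :
  ses (fun i => 0 : 'M[k]_(dimv zero_module i, dimv P i)) (fun i => 1%:M).
Proof.
split=> [a | a | i]; first exact: flatmx_eq; first by rewrite mul1mx mulmx1.
have ker1 : kermx (1%:M : 'M[k]_(dimv P i)) = 0.
  by apply/eqP; rewrite -mxrank_eq0 mxrank_ker mxrank1 subnn.
by rewrite /row_free /row_full mxrank0 mxrank1 ker1 eqxx; split; rewrite /= ?sub0mx.
Qed.

Lemma projective_ext_vanish (P : module) : projective P ->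
  forall j (Y : module), ext_vanishS j P Y.
Proof.
move=> projP j Y; elim: j P projP => [|j IHj] P projP.
  move=> E f g [_ hom_g exact_fg].
  have g_full i : row_full (g i) by case: (exact_fg i).
  have hom_id : is_hom (fun i => 1%:M : 'M[k]_(dimv P i)) by move=> a; rewrite mul1mx mulmx1.
  by have [h] := projP E P g hom_g g_full _ hom_id; exists h.
exists zero_module, P, (fun i => 0), (fun i => 1%:M); split=> //.
  exact: ses_zero_id.
exact: IHj projective_zero.
Qed.

(* Dimension shifting only changes the first argument of [ext_vanishS]. *)
Lemma ext_vanish_injective (I : module) : (forall Z, ext1_vanish Z I) ->
  forall j (X Y : module), ext_vanishS j X Y -> ext_vanishS j X I.
Proof.
move=> injI; elim=> [|j IHj] X Y /=; first by move=> _; exact: injI.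
by case=> K [P [f [g [projP ses_fg extK]]]]; exists K, P, f, g; split=> //; exact: IHj extK.
Qed.

Lemma split_of_retraction (X E Z : module) (f : hommx X E) (g : hommx E Z) (r : hommx E X) :
  ses f g -> is_hom r -> (forall i, f i *m r i = 1%:M) ->
  exists h : hommx Z E, is_hom h /\ forall i, h i *m g i = 1%:M.
Proof.
move=> [hom_f hom_g exact_fg] hom_r fr1.
have fg0 i : f i *m g i = 0 by apply/sub_kermxP; case: (exact_fg i) => _ _ /andP[].
have gg1 i : pinvmx (g i) *m g i = 1%:M by apply: mulVpmx; case: (exact_fg i).
(* The section is g^+ (1 - r f); the failure D of g^+ to commute with the arrows
   lies in the image of f, which 1 - r f kills. *)
pose e i := 1%:M - r i *m f i.
have eg i : e i *m g i = g i by rewrite mulmxBl mul1mx -mulmxA fg0 mulmx0 subr0.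
exists (fun i => pinvmx (g i) *m e i); split; last by move=> i; rewrite -mulmxA eg gg1.
apply: amap_is_hom => a i j.
set D := pinvmx (g i) *m amap E a i j - amap Z a i j *m pinvmx (g j).
have D_ker : D *m g j = 0.
  by rewrite mulmxBl -mulmxA (hom_amap hom_g) mulmxA gg1 mul1mx -mulmxA gg1 mulmx1 subrr.
have D_im : (D <= f j)%MS.
  by case: (exact_fg j) => _ _ /andP[_ /(submx_trans _)]; apply; apply/sub_kermxP.
have De : D *m e j = 0.
  by rewrite -(mulmxKpV D_im) -mulmxA mulmxBr mulmx1 [f j *m _]mulmxA fr1 mul1mx subrr mulmx0.
have e_hom : e i *m amap E a i j = amap E a i j *m e j.
  rewrite mulmxBl mulmxBr mul1mx mulmx1 -mulmxA -(hom_amap hom_f) mulmxA.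
  by rewrite -(hom_amap hom_r) mulmxA.
have -> : pinvmx (g i) *m e i *m amap E a i j = (D + amap Z a i j *m pinvmx (g j)) *m e j.
  by rewrite -mulmxA e_hom mulmxA subrK.
by rewrite mulmxDl De add0r mulmxA.
Qed.

Lemma cluster_tilting_projective n (C : module -> Prop) (P : module) :
  n_cluster_tilting n C -> projective P -> C P.
Proof. by case=> _ CP _ projP; apply/CP => Y _ j _; exact: projective_ext_vanish. Qed.

Lemma cluster_tilting_injective n (C : module -> Prop) (I : module) :
  n_cluster_tilting n C -> (forall Z, ext1_vanish Z I) -> C I.
Proof.
(* Testing Y against the zero module provides the projective presentations of Y. *)
move=> ctC injI; have C0 := cluster_tilting_projective ctC projective_zero.
case: ctC => _ CP CI; apply/CI => Y CY j jn.
exact: ext_vanish_injective injI _ _ _ ((CP Y).1 CY _ C0 j jn).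
Qed.

End Homological.

Section IndecomposableProjective.
Variables (k : fieldType) (m : nat) (A : finType) (s t : A -> 'I_m) (v : 'I_m).
Local Notation module := (module k s t).
Local Notation dimv := Defs.dimv.

Definition Pv_basis (w : 'I_m) : {pred option A} :=
  fun x => if x is Some b then (s b == v) && (t b == w) else w == v.

Local Notation e_ w := (basisv k (Pv_basis w)).

Definition Pv_arrow (d : A) (i j : 'I_m) : 'M[k]_(#|Pv_basis i|, #|Pv_basis j|) :=
  (e_ i None)^T *m e_ j (Some d).

Lemma basisv_Pv_arrow x d i j :
  e_ i x *m Pv_arrow d i j = ((x == None) && (i == v))%:R *: e_ j (Some d).
Proof.
rewrite /Pv_arrow mulmxA basisv_dot mul_scalar_mx.
by case: x => [b|] /=; rewrite ?unfold_in.
Qed.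

Lemma Pv_arrow_basisv y d i j :
  Pv_arrow d i j *m (e_ j y)^T = ((y == Some d) && (y \in Pv_basis j))%:R *: (e_ i None)^T.
Proof.
rewrite /Pv_arrow -mulmxA basisv_dot mul_mx_scalar.
by case: (eqVneq y (Some d)) => [-> | ]; rewrite ?eqxx // eq_sym => /negbTE->.
Qed.

Lemma Pv_arrow0 d i j : ~~ ((s d == i) && (t d == j)) -> Pv_arrow d i j = 0.
Proof.
move=> off; have [iv | niv] := eqVneq i v.
  by rewrite /Pv_arrow [e_ j _]basisv_notin ?mulmx0 // unfold_in /= -iv.
by rewrite /Pv_arrow basisv_notin ?trmx0 ?mul0mx // unfold_in.
Qed.

Lemma Pv_arrowM0 a b i j l : Pv_arrow a i j *m Pv_arrow b j l = 0.
Proof.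
by rewrite /Pv_arrow -mulmxA [e_ j _ *m _]mulmxA basisv_dot mul_scalar_mx scale0r mulmx0.
Qed.

Definition Pv : module := Module (rep_of_rad2 Pv_arrowM0).

Lemma amap_Pv d i j : amap Pv d i j = Pv_arrow d i j.
Proof. exact: (@amap_rep_of _ _ _ s t _ Pv_arrow Pv_arrow0 d i j). Qed.

Section Yoneda.
Variable X : module.

Definition Pv_image (x0 : 'rV[k]_(dimv X v)) (w : 'I_m) (x : option A) : 'rV_(dimv X w) :=
  if x is Some b then x0 *m amap X b v w
  else if v =P w is ReflectT e then castmx (erefl, congr1 (dimv X) e) x0 else 0.

Definition Pv_hom (x0 : 'rV[k]_(dimv X v)) : hommx Pv X :=
  fun w => \matrix_r Pv_image x0 w (enum_val r).

Lemma Pv_hom_top x0 : e_ v None *m Pv_hom x0 v = x0.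
Proof.
rewrite (basisv_mul_rows _ _ (Pv_image x0 v)) unfold_in /= eqxx.
by case: eqP => // e; rewrite eq_axiomK castmx_id.
Qed.

Lemma Pv_hom_is_hom x0 : is_hom (Pv_hom x0).
Proof.
apply: amap_is_hom => d i j; rewrite amap_Pv; apply: basisv_rows_eq => x x_in.
rewrite [LHS]mulmxA [RHS]mulmxA basisv_Pv_arrow -scalemxAl.
rewrite !(basisv_mul_rows _ _ (Pv_image x0 _)) x_in.
case: x x_in => [b _ | /eqP iv]; first by rewrite scale0r -mulmxA amapM0 mulmx0.
subst i; rewrite /= eqxx scale1r; case: eqP => // e; rewrite eq_axiomK castmx_id.
by case: ifP => // /negbT off; rewrite amap0 ?mulmx0.
Qed.

Lemma Pv_homE (f : hommx Pv X) : is_hom f -> forall w, f w = Pv_hom (e_ v None *m f v) w.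
Proof.
move=> hom_f w; apply: basisv_rows_eq => x x_in.
rewrite (basisv_mul_rows _ _ (Pv_image _ w)) x_in.
case: x x_in => [b /andP[/eqP sb /eqP tb] | /eqP wv] /=; last first.
  by subst w; case: eqP => // e; rewrite eq_axiomK castmx_id.
have <- : e_ v None *m Pv_arrow b v w = e_ w (Some b).
  by rewrite basisv_Pv_arrow /= eqxx scale1r.
by rewrite -mulmxA -amap_Pv (hom_amap hom_f) mulmxA.
Qed.

End Yoneda.

Lemma Pv_projective : projective Pv.
Proof.
move=> X Y g hom_g g_full p hom_p.
pose x0 := e_ v None *m p v *m pinvmx (g v).
have x0g : x0 *m g v = e_ v None *m p v by rewrite mulmxKpV // submx_full.
exists (Pv_hom x0); split=> [|w]; first exact: Pv_hom_is_hom.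
rewrite (Pv_homE (is_hom_comp (Pv_hom_is_hom x0) hom_g)) mulmxA Pv_hom_top x0g.
by rewrite -Pv_homE.
Qed.

End IndecomposableProjective.

Section IndecomposableInjective.
Variables (k : fieldType) (m : nat) (A : finType) (s t : A -> 'I_m) (u : 'I_m).
Local Notation module := (module k s t).
Local Notation dimv := Defs.dimv.

Definition Iu_basis (w : 'I_m) : {pred option A} :=
  fun x => if x is Some c then (t c == u) && (s c == w) else w == u.

Local Notation e_ w := (basisv k (Iu_basis w)).

Definition Iu_arrow (d : A) (i j : 'I_m) : 'M[k]_(#|Iu_basis i|, #|Iu_basis j|) :=
  (e_ i (Some d))^T *m e_ j None.

Lemma Iu_arrow_basisv x d i j :
  Iu_arrow d i j *m (e_ j x)^T = ((x == None) && (j == u))%:R *: (e_ i (Some d))^T.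
Proof.
rewrite /Iu_arrow -mulmxA basisv_dot mul_mx_scalar.
by case: x => [c|] /=; rewrite ?unfold_in.
Qed.

Lemma basisv_Iu_arrow x d i j :
  e_ i x *m Iu_arrow d i j = ((x == Some d) && (x \in Iu_basis i))%:R *: e_ j None.
Proof. by rewrite /Iu_arrow mulmxA basisv_dot mul_scalar_mx. Qed.

Lemma Iu_arrow0 d i j : ~~ ((s d == i) && (t d == j)) -> Iu_arrow d i j = 0.
Proof.
move=> off; have [ju | nju] := eqVneq j u.
  by rewrite /Iu_arrow [e_ i _]basisv_notin ?trmx0 ?mul0mx // unfold_in /= -ju andbC.
by rewrite /Iu_arrow [e_ j _]basisv_notin ?mulmx0 // unfold_in.
Qed.

Lemma Iu_arrowM0 a b i j l : Iu_arrow a i j *m Iu_arrow b j l = 0.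
Proof.
by rewrite /Iu_arrow -mulmxA [e_ j _ *m _]mulmxA basisv_dot mul_scalar_mx scale0r mulmx0.
Qed.

Definition Iu : module := Module (rep_of_rad2 Iu_arrowM0).

Lemma amap_Iu d i j : amap Iu d i j = Iu_arrow d i j.
Proof. exact: (@amap_rep_of _ _ _ s t _ Iu_arrow Iu_arrow0 d i j). Qed.

Section Yoneda.
Variable X : module.

Definition Iu_image (phi : 'cV[k]_(dimv X u)) (w : 'I_m) (x : option A) : 'cV_(dimv X w) :=
  if x is Some c then amap X c w u *m phi
  else if u =P w is ReflectT e then castmx (congr1 (dimv X) e, erefl) phi else 0.

Definition Iu_hom (phi : 'cV[k]_(dimv X u)) : hommx X Iu :=
  fun w => (\matrix_r (Iu_image phi w (enum_val r))^T)^T.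

Lemma Iu_hom_socle phi : Iu_hom phi u *m (e_ u None)^T = phi.
Proof.
rewrite (mul_cols_basisv _ _ (Iu_image phi u)) unfold_in /= eqxx.
by case: eqP => // e; rewrite eq_axiomK castmx_id.
Qed.

Lemma Iu_hom_is_hom phi : is_hom (Iu_hom phi).
Proof.
apply: amap_is_hom => d i j; rewrite amap_Iu.
apply: (@basisv_cols_eq _ _ (Iu_basis _)) => x x_in.
rewrite -[LHS]mulmxA -[RHS]mulmxA Iu_arrow_basisv -scalemxAr.
rewrite (mul_cols_basisv _ _ (Iu_image phi j)) (mul_cols_basisv _ _ (Iu_image phi i)) x_in.
case: x x_in => [c _ | /eqP ju]; first by rewrite scale0r mulmxA amapM0 mul0mx.
subst j; rewrite !eqxx scale1r /Iu_image; case: eqP => // e; rewrite eq_axiomK castmx_id.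
by case: ifP => // /negbT; rewrite -topredE /= andbC => off; rewrite amap0 ?mul0mx.
Qed.

Lemma Iu_homE (f : hommx X Iu) : is_hom f -> forall w, f w = Iu_hom (f u *m (e_ u None)^T) w.
Proof.
move=> hom_f w; apply: (@basisv_cols_eq _ _ (Iu_basis _)) => x x_in.
rewrite (mul_cols_basisv _ _ (Iu_image _ w)) x_in.
case: x x_in => [c /andP[/eqP tc /eqP sc] | /eqP wu] /=; last first.
  by subst w; case: eqP => // e; rewrite eq_axiomK castmx_id.
have <- : Iu_arrow c w u *m (e_ u None)^T = (e_ w (Some c))^T.
  by rewrite Iu_arrow_basisv /= eqxx scale1r.
by rewrite mulmxA -amap_Iu -(hom_amap hom_f) mulmxA.
Qed.

End Yoneda.

Lemma Iu_injective (Z : module) : ext1_vanish Z Iu.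
Proof.
move=> E f g ses_fg; have [hom_f _ exact_fg] := ses_fg.
have [B fB] : exists B, f u *m B = 1%:M by apply/row_freeP; case: (exact_fg u).
pose phi := B *m (e_ u None)^T.
have hom_id : is_hom (fun w => 1%:M : 'M[k]_(dimv Iu w)).
  by move=> a; rewrite mul1mx mulmx1.
apply: (split_of_retraction ses_fg (Iu_hom_is_hom phi)) => w.
rewrite (Iu_homE (is_hom_comp hom_f (Iu_hom_is_hom phi))) -mulmxA Iu_hom_socle mulmxA fB.
by have := Iu_homE hom_id w; rewrite mul1mx => <-.
Qed.

End IndecomposableInjective.

(* The cocycle theta whose only nonzero coefficient is the one along d0 from the
   basis vector c0 of I_u to the basis vector b0 of P_v is a coboundary, compared
   coefficient (c, b) along every arrow d; beta and lambda are as in the header. *)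
Definition is_coboundary (k : fieldType) (m : nat) (A : finType) (s t : A -> 'I_m)
    (v u : 'I_m) (c0 d0 b0 : A) : Prop :=
  exists beta lambda : A -> k,
    forall c d b, t c = u -> s b = v -> s c = s d -> t b = t d ->
    (c == d)%:R * beta b = (b == d)%:R * lambda c + ((c == c0) && (d == d0) && (b == b0))%:R.

Section Extension.
Variables (k : fieldType) (m : nat) (A : finType) (s t : A -> 'I_m).
Variables (v u : 'I_m) (c0 d0 b0 : A).
Local Notation module := (module k s t).
Local Notation dimv := Defs.dimv.
Local Notation eP w := (basisv k (Pv_basis s t v w)).
Local Notation eI w := (basisv k (Iu_basis s t u w)).
Local Notation dP w := #|Pv_basis s t v w|.
Local Notation dI w := #|Iu_basis s t u w|.
Local Notation Pv := (Pv k s t v).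
Local Notation Iu := (Iu k s t u).

Definition cocycle_arrow (d : A) (i j : 'I_m) : 'M[k]_(dI i, dP j) :=
  ((d == d0) && (s d == i) && (t d == j))%:R *: ((eI i (Some c0))^T *m eP j (Some b0)).

Definition ext_arrow (d : A) (i j : 'I_m) : 'M[k]_(dP i + dI i, dP j + dI j) :=
  block_mx (Pv_arrow k s t v d i j) 0 (cocycle_arrow d i j) (Iu_arrow k s t u d i j).

Lemma ext_arrow0 d i j : ~~ ((s d == i) && (t d == j)) -> ext_arrow d i j = 0.
Proof.
move=> off; rewrite /ext_arrow Pv_arrow0 // Iu_arrow0 // /cocycle_arrow -andbA.
by rewrite (negbTE off) andbF scale0r block_mx0.
Qed.

Lemma ext_arrowM0 a b i j l : ext_arrow a i j *m ext_arrow b j l = 0.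
Proof.
have cocycle_Pv : cocycle_arrow a i j *m Pv_arrow k s t v b j l = 0.
  have dot0 : eP j (Some b0) *m (eP j None)^T = 0 by rewrite basisv_dot raddf0.
  by rewrite /cocycle_arrow /Pv_arrow -scalemxAl -mulmxA [eP j _ *m _]mulmxA dot0
    mul0mx mulmx0 scaler0.
have Iu_cocycle : Iu_arrow k s t u a i j *m cocycle_arrow b j l = 0.
  have dot0 : eI j None *m (eI j (Some c0))^T = 0 by rewrite basisv_dot raddf0.
  by rewrite /cocycle_arrow /Iu_arrow -scalemxAr mulmxA -[_ *m eI j None *m _]mulmxA
    dot0 mulmx0 mul0mx scaler0.
rewrite /ext_arrow mulmx_block Pv_arrowM0 Iu_arrowM0 cocycle_Pv Iu_cocycle.
by rewrite !mulmx0 !mul0mx !addr0 block_mx0.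
Qed.

Definition ext_module : module := Module (rep_of_rad2 ext_arrowM0).

Lemma amap_ext d i j : amap ext_module d i j = ext_arrow d i j.
Proof. exact: (@amap_rep_of _ _ _ s t _ ext_arrow ext_arrow0 d i j). Qed.

Definition ext_inl : hommx Pv ext_module := fun w => row_mx 1%:M 0.
Definition ext_proj : hommx ext_module Iu := fun w => col_mx 0 1%:M.

Lemma ses_ext : ses ext_inl ext_proj.
Proof.
split.
- apply: amap_is_hom => d i j; rewrite amap_ext amap_Pv /ext_inl /ext_arrow.
  by rewrite mul_mx_row mul_row_block mulmx1 mulmx0 !mul1mx !mul0mx !addr0.
- apply: amap_is_hom => d i j; rewrite amap_ext amap_Iu /ext_proj /ext_arrow.
  by rewrite mul_block_col mul_col_mx !mulmx0 !mulmx1 !mul0mx !mul1mx !add0r.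
move=> w; rewrite /ext_inl /ext_proj.
have inl_free : row_free (row_mx (1%:M : 'M[k]_(dP w)) (0 : 'M_(dP w, dI w))).
  by apply/row_freeP; exists (col_mx 1%:M 0); rewrite mul_row_col mulmx1 mulmx0 addr0.
have proj_full : row_full (col_mx (0 : 'M[k]_(dP w, dI w)) (1%:M : 'M_(dI w))).
  by apply/row_fullP; exists (row_mx 0 1%:M); rewrite mul_row_col mulmx1 mulmx0 add0r.
have inl_ker : (row_mx (1%:M : 'M[k]_(dP w)) (0 : 'M_(dP w, dI w)) <=
                kermx (col_mx (0 : 'M[k]_(dP w, dI w)) (1%:M : 'M_(dI w))))%MS.
  by apply/sub_kermxP; rewrite mul_row_col mulmx0 mulmx1 addr0.
split=> //; rewrite -(mxrank_leqif_eq inl_ker).2 mxrank_ker (eqP proj_full).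
by rewrite (eqP inl_free) addnK.
Qed.

Section Splitting.
Variable h : hommx Iu ext_module.
Hypotheses (hom_h : is_hom h) (h_section : forall w, h w *m ext_proj w = 1%:M).

Lemma split_cocycle_eq d i j :
  Iu_arrow k s t u d i j *m lsubmx (h j) =
  lsubmx (h i) *m Pv_arrow k s t v d i j + cocycle_arrow d i j.
Proof.
have h_right w : rsubmx (h w) = 1%:M.
  by rewrite -(h_section w) -{2}(hsubmxK (h w)) mul_row_col mulmx0 mulmx1 add0r.
have := hom_amap hom_h d i j; rewrite amap_Iu amap_ext /ext_arrow.
rewrite -(hsubmxK (h j)) -(hsubmxK (h i)) !h_right mul_mx_row mul_row_block.
by rewrite !row_mxKl; case/eq_row_mx; rewrite mul1mx.
Qed.

Definition split_beta (b : A) : k :=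
  (eI (t b) None *m lsubmx (h (t b)) *m (eP (t b) (Some b))^T) 0 0.
Definition split_lambda (c : A) : k :=
  (eI (s c) (Some c) *m lsubmx (h (s c)) *m (eP (s c) None)^T) 0 0.

Lemma split_is_coboundary : is_coboundary k s t v u c0 d0 b0.
Proof.
exists split_beta, split_lambda => c d b tc sb scd tbd.
have c_in : Some c \in Iu_basis s t u (s c) by rewrite unfold_in /= tc !eqxx.
have b_in : Some b \in Pv_basis s t v (t b) by rewrite unfold_in /= sb !eqxx.
have Pv_term :
    eI (s c) (Some c) *m (lsubmx (h (s c)) *m Pv_arrow k s t v d (s c) (t b)) *m
    (eP (t b) (Some b))^T =
    (b == d)%:R *: (eI (s c) (Some c) *m lsubmx (h (s c)) *m (eP (s c) None)^T).
  by rewrite mulmxA -mulmxA Pv_arrow_basisv b_in andbT -scalemxAr.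
have cocycle_term :
    eI (s c) (Some c) *m cocycle_arrow d (s c) (t b) *m (eP (t b) (Some b))^T =
    ((c == c0) && (d == d0) && (b == b0))%:R%:M.
  have b0_dot : (Some b0 == Some b) && (Some b0 \in Pv_basis s t v (t b)) = (b == b0).
    case: (eqVneq b b0) => [<- | ne]; rewrite ?eqxx ?b_in //.
    by rewrite (inj_eq Some_inj) eq_sym (negbTE ne).
  rewrite /cocycle_arrow -scd -tbd !eqxx !andbT -scalemxAr -scalemxAl mulmxA basisv_dot.
  rewrite c_in andbT mul_scalar_mx -scalemxAl basisv_dot b0_dot !scale_scalar_mx -!natrM.
  by rewrite (inj_eq Some_inj) !mulnb andbCA andbA.
have := congr1 (fun M => (eI (s c) (Some c) *m M *m (eP (t b) (Some b))^T) 0 0)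
  (split_cocycle_eq d (s c) (t b)).
rewrite /= mulmxA basisv_Iu_arrow c_in andbT -!scalemxAl mxE.
rewrite mulmxDr mulmxDl Pv_term cocycle_term.
by rewrite /split_beta /split_lambda !mxE (inj_eq Some_inj) mulr1n.
Qed.

End Splitting.

Lemma ext1_is_coboundary : ext1_vanish Iu Pv -> is_coboundary k s t v u c0 d0 b0.
Proof.
move=> ext1; have [h [hom_h h_section]] := ext1 _ _ _ ses_ext.
exact: split_is_coboundary hom_h h_section.
Qed.

End Extension.

Section DegreeBound.
Variables (k : fieldType) (m : nat) (A : finType) (s t : A -> 'I_m) (a0 : A).
Local Notation is_coboundary := (is_coboundary k s t (s a0) (t a0)).

Lemma in_in_not_coboundary c c' : t c = t a0 -> t c' = t a0 ->
  c != a0 -> c' != a0 -> c != c' -> ~ is_coboundary c c a0.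
Proof.
move=> tc tc' ca0 c'a0 cc' [beta [lambda cobound]].
have := cobound c c a0 tc erefl erefl (esym tc).
have := cobound c' c' a0 tc' erefl erefl (esym tc').
rewrite !eqxx [c' == c]eq_sym [a0 == c]eq_sym [a0 == c']eq_sym (negbTE cc') (negbTE ca0).
by rewrite (negbTE c'a0) /= !mul1r !mul0r !add0r => -> /esym/eqP; rewrite oner_eq0.
Qed.

Lemma out_out_not_coboundary d d' : s d = s a0 -> s d' = s a0 ->
  d != a0 -> d' != a0 -> d != d' -> ~ is_coboundary a0 d d.
Proof.
move=> sd sd' da0 d'a0 dd' [beta [lambda cobound]].
have := cobound a0 d d erefl sd (esym sd) erefl.
have := cobound a0 d' d' erefl sd' (esym sd') erefl.
rewrite !eqxx [d' == d]eq_sym [a0 == d]eq_sym [a0 == d']eq_sym (negbTE dd') (negbTE da0).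
rewrite (negbTE d'a0) /= !mul1r !mul0r addr0 => <-.
by rewrite add0r => /eqP; rewrite eq_sym oner_eq0.
Qed.

Lemma in_out_not_coboundary c d : t c = t a0 -> s d = s a0 ->
  c != a0 -> d != a0 -> ~ is_coboundary c c a0.
Proof.
move=> tc sd ca0 da0 [beta [lambda cobound]].
have := cobound c c a0 tc erefl erefl (esym tc).
have := cobound a0 a0 a0 erefl erefl erefl erefl.
have := cobound a0 d d erefl sd (esym sd) erefl.
rewrite !eqxx ![a0 == _]eq_sym (negbTE ca0) (negbTE da0) /=.
by rewrite !mul1r !mul0r !addr0 add0r => <- -> /eqP; rewrite eq_sym oner_eq0.
Qed.

Lemma degree_not_coboundary : (3 < outdeg s (s a0) + indeg t (t a0))%N ->
  exists c0 d0 b0, ~ is_coboundary c0 d0 b0.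
Proof.
pose X := [set d | s d == s a0] :\ a0; pose Y := [set c | t c == t a0] :\ a0.
have inX d : (d \in X) = (d != a0) && (s d == s a0) by rewrite !inE.
have inY c : (c \in Y) = (c != a0) && (t c == t a0) by rewrite !inE.
have -> : outdeg s (s a0) = #|X|.+1 by rewrite /outdeg (cardsD1 a0) inE eqxx.
have -> : indeg t (t a0) = #|Y|.+1 by rewrite /indeg (cardsD1 a0) inE eqxx.
rewrite addSn addnS !ltnS => XY2.
have [Y2 | Y1] := ltnP 1 #|Y|.
  have [c [c' [/[!inY] /andP[ca0 /eqP tc] /andP[c'a0 /eqP tc'] cc']]] := card_gt1P Y2.
  by exists c, c, a0; exact: in_in_not_coboundary tc tc' ca0 c'a0 cc'.
have [X2 | X1] := ltnP 1 #|X|.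
  have [d [d' [/[!inX] /andP[da0 /eqP sd] /andP[d'a0 /eqP sd'] dd']]] := card_gt1P X2.
  by exists a0, d, d; exact: out_out_not_coboundary sd sd' da0 d'a0 dd'.
have [c /[!inY] /andP[ca0 /eqP tc]] : exists c, c \in Y by apply/card_gt0P; lia.
have [d /[!inX] /andP[da0 /eqP sd]] : exists d, d \in X by apply/card_gt0P; lia.
by exists c, c, a0; exact: in_out_not_coboundary tc sd ca0 da0.
Qed.

End DegreeBound.

Theorem corollary2p5 (k : fieldType) (m : nat) (A : finType) (s t : A -> 'I_m)
    (n : nat) (C : module k s t -> Prop) :
  (2 <= n)%N ->
  quiver_connected s t ->
  n_cluster_tilting n C ->
  forall a : A, (outdeg s (s a) + indeg t (t a) <= 3)%N.
Proof.
move=> n2 _ ctC a0; rewrite leqNgt; apply/negP.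
move=> /(degree_not_coboundary k) [c0 [d0 [b0 []]]]; apply: ext1_is_coboundary.
have C_Pv := cluster_tilting_projective ctC (@Pv_projective k _ _ s t (s a0)).
have C_Iu := cluster_tilting_injective ctC (@Iu_injective k _ _ s t (t a0)).
by case: ctC => _ C_ext _; exact: (C_ext _).1 C_Iu _ C_Pv 0 n2.
Qed.
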